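(* Let $d$ be a positive integer and let $\omega_N\subset\mathbb{S}^{d-1}$ be a set of $N$ distinct points. Assume that for any three distinct points $x,y,z\in\omega_N$, $$\langle x,y\rangle\langle x,z\rangle\langle y,z\rangle<0.$$ Then $N\le d+1$.
   Context: $\langle\cdot,\cdot\rangle$ is the Euclidean inner product and $\mathbb{S}^{d-1}$ is the unit sphere in $\mathbb{R}^d$. *)

From mathcomp Require Import all_boot all_order all_algebra.
From mathcomp Require Import reals.
Set Implicit Arguments. Unset Strict Implicit. Unset Printing Implicit Defensive.
Import Order.TTheory GRing.Theory Num.Theory.
Local Open Scope ring_scope.

Definition inner (R : realType) (d : nat) (x y : 'rV[R]_d) : R :=
  \sum_(k < d) x 0 k * y 0 k.

Definition on_sphere (R : realType) (d : nat) (x : 'rV[R]_d) : Prop :=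
  inner x x = 1.

From mathcomp Require Import all_boot all_order all_algebra.
From mathcomp Require Import reals.
From mathcomp Require Import zify ring.
Set Implicit Arguments. Unset Strict Implicit. Unset Printing Implicit Defensive.
Import Order.TTheory GRing.Theory Num.Theory.
Local Open Scope ring_scope.

(* Fix a pivot x_p and replace it by -x_p and every other x_i by
   sg<x_p, x_i> x_i.  The pivot then makes an obtuse angle with every x_i,
   and for i, j <> p the product <x_i, x_j> gets multiplied by the sign of
   <x_p, x_i><x_p, x_j>, which by the triple condition is opposite to the
   sign of <x_i, x_j>; so all the angles become obtuse.
   Among n pairwise obtuse vectors, any n - 1 of them are linearly
   independent: splitting a vanishing combination into its positive and
   negative parts, the common value s has <s, s> <= 0, hence s = 0, and
   pairing a nonnegative vanishing combination with the remaining vector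
   kills every coefficient.  So n - 1 <= d. *)

Section InnerProduct.

Variables (R : realType) (d : nat).
Implicit Types (x y : 'rV[R]_d) (a : R).

Lemma innerC x y : inner x y = inner y x.
Proof. by apply: eq_bigr => k _; rewrite mulrC. Qed.

Lemma inner0l y : inner 0 y = 0.
Proof. by apply: big1 => k _; rewrite mxE mul0r. Qed.

Lemma innerDl y : {morph (fun x => inner x y) : x1 x2 / x1 + x2}.
Proof.
by move=> x1 x2; rewrite /inner -big_split; apply: eq_bigr => k _; rewrite mxE mulrDl.
Qed.

Lemma innerZl a x y : inner (a *: x) y = a * inner x y.
Proof. by rewrite /inner mulr_sumr; apply: eq_bigr => k _; rewrite mxE mulrA. Qed.

Lemma innerZr a x y : inner x (a *: y) = a * inner x y.
Proof. by rewrite innerC innerZl innerC. Qed.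

Lemma innerNl x y : inner (- x) y = - inner x y.
Proof. by rewrite -scaleN1r innerZl mulN1r. Qed.

Lemma inner_suml (I : Type) (r : seq I) (P : pred I) (f : I -> 'rV[R]_d) y :
  inner (\sum_(i <- r | P i) f i) y = \sum_(i <- r | P i) inner (f i) y.
Proof. exact: (big_morph (fun x => inner x y) (innerDl y) (inner0l y)). Qed.

Lemma inner_sumr (I : Type) (r : seq I) (P : pred I) (f : I -> 'rV[R]_d) x :
  inner x (\sum_(i <- r | P i) f i) = \sum_(i <- r | P i) inner x (f i).
Proof. by rewrite innerC inner_suml; apply: eq_bigr => i _; rewrite innerC. Qed.

Lemma inner_ge0 x : 0 <= inner x x.
Proof. by apply: sumr_ge0 => k _; rewrite -expr2 sqr_ge0. Qed.

Lemma inner_eq0 x : (inner x x == 0) = (x == 0).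
Proof.
apply/eqP/eqP => [xx0|->]; last exact: inner0l.
apply/rowP => k; rewrite mxE; apply/eqP; rewrite -sqrf_eq0 expr2; apply/eqP.
by apply: (psumr_eq0P _ xx0) => // i _; rewrite -expr2 sqr_ge0.
Qed.

End InnerProduct.

Section ObtuseFamily.

Variables (R : realType) (d m : nat) (u : 'I_m -> 'rV[R]_d).
Hypothesis u_obtuse : forall i j, i != j -> inner (u i) (u j) < 0.

Lemma obtuse_split_comb_eq0 (P : pred 'I_m) (a b : 'I_m -> R) :
  (forall i, P i -> 0 <= a i) -> (forall i, ~~ P i -> 0 <= b i) ->
  \sum_(i | P i) a i *: u i = \sum_(i | ~~ P i) b i *: u i ->
  \sum_(i | P i) a i *: u i = 0.
Proof.
move=> a_ge0 b_ge0 ab; apply/eqP; rewrite -inner_eq0 eq_le inner_ge0 andbT.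
rewrite {2}ab inner_suml; apply: sumr_le0 => i Pi.
rewrite innerZl inner_sumr mulr_sumr; apply: sumr_le0 => j nPj.
have ij : i != j by apply: contraNneq nPj => <-.
rewrite innerZr mulrA mulr_ge0_le0 ?mulr_ge0 ?a_ge0 ?b_ge0 //.
exact/ltW/u_obtuse.
Qed.

Variable w : 'rV[R]_d.
Hypothesis u_obtuse_w : forall i, inner (u i) w < 0.

Lemma obtuse_nonneg_comb_eq0 (P : pred 'I_m) (a : 'I_m -> R) :
  (forall i, P i -> 0 <= a i) -> \sum_(i | P i) a i *: u i = 0 ->
  forall i, P i -> a i = 0.
Proof.
move=> a_ge0 a0 i Pi.
have terms_ge0 j : P j -> 0 <= - (a j * inner (u j) w).
  by move=> Pj; rewrite oppr_ge0 mulr_ge0_le0 ?a_ge0 ?ltW.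
have : \sum_(j | P j) - (a j * inner (u j) w) = 0.
  rewrite sumrN -[RHS]oppr0 -[0 in RHS](inner0l w) -a0 inner_suml; congr (- _).
  by apply: eq_bigr => j _; rewrite innerZl.
move=> /(psumr_eq0P terms_ge0)/(_ i Pi)/eqP.
by rewrite oppr_eq0 mulf_eq0 (negbTE (ltr0_neq0 (u_obtuse_w i))) orbF => /eqP.
Qed.

Lemma obtuse_comb_eq0 (c : 'I_m -> R) :
  \sum_i c i *: u i = 0 -> forall i, c i = 0.
Proof.
pose P i := 0 <= c i; move=> c0.
have c_ge0 i : P i -> 0 <= c i by [].
have Nc_ge0 i : ~~ P i -> 0 <= - c i by rewrite oppr_ge0 -ltNge => /ltW.
have split_eq : \sum_(i | P i) c i *: u i = \sum_(i | ~~ P i) (- c i) *: u i.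
  move: c0; rewrite (bigID P) /= => /eqP; rewrite addr_eq0 => /eqP ->.
  by rewrite -sumrN; apply: eq_bigr => i _; rewrite scaleNr.
have pos0 := obtuse_split_comb_eq0 c_ge0 Nc_ge0 split_eq.
have neg0 : \sum_(i | ~~ P i) (- c i) *: u i = 0 by rewrite -split_eq.
move=> i; have [Pi|nPi] := boolP (P i).
  exact: (obtuse_nonneg_comb_eq0 c_ge0 pos0 Pi).
by apply/eqP; rewrite -oppr_eq0; apply/eqP; exact: (obtuse_nonneg_comb_eq0 Nc_ge0 neg0 nPi).
Qed.

End ObtuseFamily.

Lemma obtuse_family_card (R : realType) (d n : nat) (v : 'I_n -> 'rV[R]_d) :
  (forall i j, i != j -> inner (v i) (v j) < 0) -> (n <= d.+1)%N.
Proof.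
case: n v => [//|m] v v_obtuse.
pose u i := v (lift ord0 i).
have u_obtuse i j : i != j -> inner (u i) (u j) < 0.
  by move=> ij; apply: v_obtuse; rewrite (inj_eq lift_inj).
have u_obtuse_v0 i : inner (u i) (v ord0) < 0.
  by apply: v_obtuse; rewrite eq_sym neq_lift.
have : row_free (\matrix_i u i).
  apply: inj_row_free => r; rewrite mulmx_sum_row.
  under eq_bigr do rewrite rowK.
  move=> /(obtuse_comb_eq0 u_obtuse u_obtuse_v0) r0.
  by apply/rowP => i; rewrite r0 mxE.
by rewrite -row_leq_rank => /leq_trans; apply; apply: rank_leq_col.
Qed.

Lemma exists_ord_neq2 (m : nat) (i j : 'I_m) :
  (2 < m)%N -> exists k : 'I_m, (k != i) && (k != j).
Proof.
move=> m_gt2; have : (0 < #|~: [set i; j]|)%N.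
  by have := cardsC [set i; j]; rewrite cards2 card_ord; lia.
by case/card_gt0P => k; rewrite !inE negb_or => ?; exists k.
Qed.

Lemma triple_neg_inner_neq0 (R : realType) (d n : nat) (x : 'I_n -> 'rV[R]_d) :
  (2 < n)%N ->
  (forall i j k, i != j -> i != k -> j != k ->
     inner (x i) (x j) * inner (x i) (x k) * inner (x j) (x k) < 0) ->
  forall i j, i != j -> inner (x i) (x j) != 0.
Proof.
move=> n_gt2 triple_neg i j ij; have [k /andP[ki kj]] := exists_ord_neq2 i j n_gt2.
have := triple_neg i j k ij; rewrite ![_ == k]eq_sym => /(_ ki kj).
by apply: contraTneq => ->; rewrite !mul0r ltxx.
Qed.

Definition flip_signs (R : realType) (d n : nat) (p : 'I_n) (x : 'I_n -> 'rV[R]_d)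
    (i : 'I_n) : 'rV[R]_d :=
  if i == p then - x p else Num.sg (inner (x p) (x i)) *: x i.

Lemma flip_signs_obtuse (R : realType) (d n : nat) (p : 'I_n) (x : 'I_n -> 'rV[R]_d) :
  (forall i j k, i != j -> i != k -> j != k ->
     inner (x i) (x j) * inner (x i) (x k) * inner (x j) (x k) < 0) ->
  (forall i j, i != j -> inner (x i) (x j) != 0) ->
  forall i j, i != j -> inner (flip_signs p x i) (flip_signs p x j) < 0.
Proof.
move=> triple_neg inner_neq0.
have pivot_obtuse j : j != p -> inner (flip_signs p x p) (flip_signs p x j) < 0.
  move=> jp; rewrite /flip_signs eqxx (negbTE jp) innerNl innerZr -normrEsg.
  by rewrite oppr_lt0 normr_gt0 inner_neq0 // eq_sym.
move=> i j.
have [-> pj|ip] := eqVneq i p; first by apply: pivot_obtuse; rewrite eq_sym.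
have [-> _|jp ij] := eqVneq j p; first by rewrite innerC; apply: pivot_obtuse.
rewrite /flip_signs (negbTE ip) (negbTE jp) innerZl innerZr mulrA.
set ai := inner (x p) (x i); set aj := inner (x p) (x j).
have norm_gt0 : 0 < `|ai| * `|aj|.
  by rewrite mulr_gt0 // normr_gt0 inner_neq0 // eq_sym.
rewrite -(pmulr_rlt0 _ norm_gt0).
have -> : `|ai| * `|aj| * (Num.sg ai * Num.sg aj * inner (x i) (x j))
          = (Num.sg ai * `|ai|) * (Num.sg aj * `|aj|) * inner (x i) (x j).
  by ring.
by rewrite !mulr_sg_norm triple_neg // eq_sym.
Qed.

Theorem theorem3p3 (R : realType) (d N : nat) (x : 'I_N -> 'rV[R]_d) :
  (0 < d)%N ->
  injective x ->
  (forall i, on_sphere (x i)) ->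
  (forall i j k, i != j -> i != k -> j != k ->
     inner (x i) (x j) * inner (x i) (x k) * inner (x j) (x k) < 0) ->
  (N <= d.+1)%N.
Proof.
move=> d_gt0 _ _ triple_neg.
have [N_le2|N_gt2] := leqP N 2; first by lia.
pose p : 'I_N := Ordinal (ltnW (ltnW N_gt2)).
apply: (obtuse_family_card (v := flip_signs p x)).
apply: flip_signs_obtuse => //.
exact: triple_neg_inner_neq0.
Qed.
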